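(* Let $B>1$ and $k\ge1$ be constants, and let $(\theta_L,\theta_R)$ with $\theta_L,\theta_R\in(0,1)$ be the positive solution of $\exp(-B\sqrt k\,\theta_R)=1-\theta_L$ and $\exp(-\frac{B}{\sqrt k}\theta_L)=1-\theta_R$. Then $(1-\theta_L)(1-\theta_R)B^2<1$.
   Context: $\log$ and $\exp$ are natural. The pair $(\theta_L,\theta_R)$ describes the asymptotic fractions of $V_L$ and $V_R$ lying in the giant component of the bipartite random graph $G(n,kn,\frac{B}{n\sqrt k})$. *)

From Stdlib Require Import Reals.
Open Scope R_scope.

(* (thL, thR) is a positive solution in (0,1)^2 of the giant-component
   fixed-point system for G(n, kn, B/(n sqrt k)). *)
Definition giant_fixed_point (B k thL thR : R) : Prop :=
  0 < thL < 1 /\ 0 < thR < 1 /\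
  exp (- (B * sqrt k * thR)) = 1 - thL /\
  exp (- ((B / sqrt k) * thL)) = 1 - thR.

(* Write [a = B sqrt k] and [b = B / sqrt k], so that [a b = B^2].  Since
   [1 + v < exp v] for [v > 0], the equation [1 - thL = exp (- a thR)] gives
   [(1 - thL) a thR < thL], and symmetrically [(1 - thR) b thL < thR].
   Multiplying the two inequalities and cancelling [thL thR] yields
   [(1 - thL) (1 - thR) a b < 1]. *)
From Stdlib Require Import Reals Lra Psatz.
Open Scope R_scope.

Lemma exp_opp_mul_lt (v : R) : 0 < v -> exp (- v) * v < 1 - exp (- v).
Proof.
  intros Hv.
  assert (Hinv : exp (- v) * exp v = 1).
  { rewrite <- exp_plus; replace (- v + v) with 0 by ring; apply exp_0. }
  pose proof (exp_ineq1 v ltac:(lra)).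
  pose proof (exp_pos (- v)).
  nra.
Qed.

Lemma fixed_point_product_lt (a b x y : R) :
  0 < x < 1 -> 0 < y < 1 -> 0 < a -> 0 < b ->
  (1 - x) * a * y < x -> (1 - y) * b * x < y ->
  (1 - x) * (1 - y) * (a * b) < 1.
Proof.
  intros Hx Hy Ha Hb Hxy Hyx.
  assert (Hprod : ((1 - x) * a * y) * ((1 - y) * b * x) < x * y).
  { apply Rmult_le_0_lt_compat; try lra; apply Rmult_le_pos; nra. }
  apply (Rmult_lt_reg_r (x * y)); [nra |].
  replace ((1 - x) * (1 - y) * (a * b) * (x * y))
    with (((1 - x) * a * y) * ((1 - y) * b * x)) by ring.
  lra.
Qed.

Lemma mul_sqrt_div_sqrt (B k : R) : 0 < k -> B * sqrt k * (B / sqrt k) = B ^ 2.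
Proof.
  intros Hk.
  pose proof (sqrt_lt_R0 k Hk).
  field; lra.
Qed.

Theorem mainTheorem16 (B k thL thR : R) :
  1 < B -> 1 <= k -> giant_fixed_point B k thL thR ->
  (1 - thL) * (1 - thR) * B ^ 2 < 1.
Proof.
  intros HB Hk [HL [HR [EL ER]]].
  assert (Hs : 0 < sqrt k) by (apply sqrt_lt_R0; lra).
  assert (Ha : 0 < B * sqrt k) by nra.
  assert (Hb : 0 < B / sqrt k) by (apply Rdiv_lt_0_compat; lra).
  rewrite <- (mul_sqrt_div_sqrt B k) by lra.
  apply fixed_point_product_lt; try assumption.
  - pose proof (exp_opp_mul_lt (B * sqrt k * thR) ltac:(nra)) as H.
    rewrite EL in H; lra.
  - pose proof (exp_opp_mul_lt (B / sqrt k * thL) ltac:(nra)) as H.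
    rewrite ER in H; lra.
Qed.
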